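(* Let $(F,+,\cdot)$ be a Field with Unity $1$ and additive identity $0$, and let $(\mathbb S,+_{\mathbb S},\cdot_{\mathbb S})$ be the structure on $\mathbb S=F\times F$ described in the context. Then $(\mathbb S,+_{\mathbb S},\cdot_{\mathbb S})$ is an S-Field with $(\mathbb S_0,+_{\mathbb S},\cdot_{\mathbb S})\cong(F,+,\cdot)$; that is, $(\mathbb S,+_{\mathbb S},\cdot_{\mathbb S})$ is a Proper S-Field Extension of $(F,+,\cdot)$.
   Context: Construction: $\mathbb S=F\times F=\{(x,y):x,y\in F\}$, with $\mathbf 0=(0,0)$ and distinguished element $\mathbf 1=(1,0)$, and operations $(x,y)+_{\mathbb S}(u,v)=(x+u,\,y+v)$ and $(x,y)\cdot_{\mathbb S}(u,v)=(x\cdot u+y+v-x\cdot v-y\cdot u,\;y\cdot v+x\cdot v+y\cdot u)$. General definitions (written for a structure $(\mathbb S,+,\cdot)$ with zero $0$ and distinguished element $1$): An S-Structure is a triple $(\mathbb S,+,\cdot)$ where $+,\cdot$ are binary operations on the set $\mathbb S$ such that $(\mathbb S,+)$ is a commutative group with identity $0$ (inverse $-s$, $s-t:=s+(-t)$), $\mathbb S$ is closed under $\cdot$, and there is $s\in\mathbb S$ with $0\cdot s\neq0$ or $s\cdot0\neq0$. Commutative: $s\cdot t=t\cdot s$ for all $s,t$. For $\alpha\in\mathbb S$: $\mathbb S_\alpha=\{s:0\cdot s=s\cdot0=\alpha\}$, $\Lambda=\{\alpha:\mathbb S_\alpha\neq\emptyset\}$. Wheel Distributive: $s\cdot(t+r)+(s\cdot0)=(s\cdot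 t)+(s\cdot r)$ for all $s,t,r$. S-Associative: for all $m,n\in\mathbb S_0$, $s\in\mathbb S$, $m\cdot(n\cdot s)=(m\cdot n)\cdot s-([(m-1)\cdot(n-1)]\cdot(0\cdot s))$. Base: if $\mathbb S_0\neq\emptyset$, $\alpha\in\Lambda$, then $q\in\mathbb S_\alpha$ is a Base for $\mathbb S_\alpha$ if $q+\beta\in\mathbb S_\alpha$ for all $\beta\in\mathbb S_0$ and each $s\in\mathbb S_\alpha$ is $q+\beta$ for some $\beta\in\mathbb S_0$; Coordinated: $\mathbb S_0\neq\emptyset$ and each $\mathbb S_\alpha$, $\alpha\in\Lambda$, has a Base. Standard Bases (for a Coordinated Commutative S-Structure): there is a specified $q_0(1)\in\mathbb S_1$ which is a Base for $\mathbb S_1$, and for each $\alpha\in\Lambda$, $q_0(\alpha):=\alpha\cdot(q_0(1)+1)-1$ lies in $\mathbb S_\alpha$ and is a Base for $\mathbb S_\alpha$. Essential S-Structure: Commutative, Wheel Distributive, S-Associative, has Standard Bases, $0,1\in\mathbb S_0$, and $\mathbb S_0=\{1\cdot x:x\in\mathbb S_0\}$. Unity: $e\in\Lambda$ with $e\cdot s=s\cdot e=s$ for all $s$. Scalar Inverses: there is a Unity $e$ and every nonzero $x\in\mathbb S_0$ has $x^{-1}\in\mathbb S_0$ with $x\cdot x^{-1}=x^{-1}\cdot x=e$. S-Ring: Essential S-Structure with a Unity. S-Field: S-Ring with Scalar Inverses. S-Extension: $(\mathbb S,+,\cdot)$ is an S-Extension of $(F,+_F,\cdot_F)$ if $F$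 is closed under $+_F$ and $\cdot_F$, $(\mathbb S,+,\cdot)$ is an S-Structure, and there is $F_{\mathbb S}\subset\mathbb S$ and an isomorphism $\phi:(F,+_F,\cdot_F)\to(F_{\mathbb S},+,\cdot)$. It is a Proper S-Extension if moreover $(\mathbb S_0,+,\cdot)\cong(F,+_F,\cdot_F)$. A Proper S-Field Extension is an S-Field that is a Proper S-Extension. *)

From HB Require Import structures.
From mathcomp Require Import all_boot all_algebra.
Set Implicit Arguments. Unset Strict Implicit. Unset Printing Implicit Defensive.
Import GRing.Theory.
Local Open Scope ring_scope.

Section SNotions.
Variables (T : Type) (add mul : T -> T -> T) (zero : T) (opp : T -> T) (one : T).

Definition ssub (s t : T) : T := add s (opp t).

(* (T, add) is a commutative group with identity zero and inverse opp,
   and 0*s <> 0 or s*0 <> 0 for some s (closure under mul is by typing). *)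
Definition SStructure : Prop :=
  (forall a b c, add a (add b c) = add (add a b) c) /\
  (forall a b, add a b = add b a) /\
  (forall a, add zero a = a) /\
  (forall a, add (opp a) a = zero) /\
  (exists s, mul zero s <> zero \/ mul s zero <> zero).

Definition SCommutative : Prop := forall s t, mul s t = mul t s.

Definition inS (alpha s : T) : Prop := mul zero s = alpha /\ mul s zero = alpha.

Definition inLambda (alpha : T) : Prop := exists s, inS alpha s.

Definition WheelDistributive : Prop :=
  forall s t r, add (mul s (add t r)) (mul s zero) = add (mul s t) (mul s r).

Definition SAssociative : Prop :=
  forall m n s, inS zero m -> inS zero n ->
    mul m (mul n s) =
    ssub (mul (mul m n) s) (mul (mul (ssub m one) (ssub n one)) (mul zero s)).

Definition IsBase (alpha q : T) : Prop :=
  inS alpha q /\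
  (forall beta, inS zero beta -> inS alpha (add q beta)) /\
  (forall s, inS alpha s -> exists beta, inS zero beta /\ s = add q beta).

Definition Coordinated : Prop :=
  (exists s, inS zero s) /\
  (forall alpha, inLambda alpha -> exists q, IsBase alpha q).

Definition q0 (q1 alpha : T) : T := ssub (mul alpha (add q1 one)) one.

Definition HasStandardBases : Prop :=
  SCommutative /\ Coordinated /\
  exists q1, inS one q1 /\ IsBase one q1 /\
    forall alpha, inLambda alpha -> inS alpha (q0 q1 alpha) /\ IsBase alpha (q0 q1 alpha).

Definition EssentialSStructure : Prop :=
  SStructure /\ SCommutative /\ WheelDistributive /\ SAssociative /\
  HasStandardBases /\ inS zero zero /\ inS zero one /\
  (forall s, inS zero s <-> exists x, inS zero x /\ s = mul one x).

Definition IsUnity (e : T) : Prop :=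
  inLambda e /\ forall s, mul e s = s /\ mul s e = s.

Definition ScalarInverses : Prop :=
  exists e, IsUnity e /\
    forall x, inS zero x -> x <> zero ->
      exists xi, inS zero xi /\ mul x xi = e /\ mul xi x = e.

Definition SRing : Prop := EssentialSStructure /\ exists e, IsUnity e.

Definition SField : Prop := SRing /\ ScalarInverses.

Definition SExtension (F : Type) (addF mulF : F -> F -> F) : Prop :=
  SStructure /\
  exists (FS : T -> Prop) (phi : F -> T),
    (forall a, FS (phi a)) /\
    (forall a b, phi a = phi b -> a = b) /\
    (forall t, FS t -> exists a, phi a = t) /\
    (forall a b, phi (addF a b) = add (phi a) (phi b)) /\
    (forall a b, phi (mulF a b) = mul (phi a) (phi b)).

Definition S0IsoF (F : Type) (addF mulF : F -> F -> F) : Prop :=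
  exists psi : F -> T,
    (forall a, inS zero (psi a)) /\
    (forall a b, psi a = psi b -> a = b) /\
    (forall t, inS zero t -> exists a, psi a = t) /\
    (forall a b, psi (addF a b) = add (psi a) (psi b)) /\
    (forall a b, psi (mulF a b) = mul (psi a) (psi b)).

Definition ProperSExtension (F : Type) (addF mulF : F -> F -> F) : Prop :=
  SExtension addF mulF /\ S0IsoF addF mulF.

Definition ProperSFieldExtension (F : Type) (addF mulF : F -> F -> F) : Prop :=
  SField /\ ProperSExtension addF mulF.

End SNotions.

Section Construction.
Variable F : fieldType.

Definition Sadd (s t : F * F) : F * F := (s.1 + t.1, s.2 + t.2).
Definition Sopp (s : F * F) : F * F := (- s.1, - s.2).
Definition Szero : F * F := (0, 0).
Definition Sone : F * F := (1, 0).
Definition Smul (s t : F * F) : F * F :=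
  let: (x, y) := s in let: (u, v) := t in
  (x * u + y + v - x * v - y * u, y * v + x * v + y * u).

End Construction.

(* Since [0 * (x, y) = (x, y) * 0 = (y, 0)], the layer [S_alpha] is the line
   [{(x, a) | x in F}] for [alpha = (a, 0)] and is empty otherwise; in particular
   [S_0 = F x {0}], on which the multiplication restricts to that of [F], so
   [a |-> (a, 0)] is an isomorphism of [F] onto [S_0] with unity [(1, 0)] and
   inverses [(x^-1, 0)].  Each layer is a translate of [S_0], so each of its
   points is a base; the remaining axioms are polynomial identities in the
   coordinates. *)
From mathcomp Require Import all_boot all_algebra.
From mathcomp Require Import ring.
Import GRing.Theory.
Local Open Scope ring_scope.

Lemma SExtension_of_S0IsoF (T F : Type) (add mul : T -> T -> T) (zero : T)
    (opp : T -> T) (addF mulF : F -> F -> F) :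
  SStructure add mul zero opp -> S0IsoF add mul zero addF mulF ->
  SExtension add mul zero opp addF mulF.
Proof.
move=> SS [psi psi_iso]; split=> //.
by exists (inS mul zero zero), psi.
Qed.

Section PairConstruction.
Variable F : fieldType.
Implicit Types (s : F * F) (y : F).

Local Notation add := (@Sadd F).
Local Notation mul := (@Smul F).
Local Notation zero := (@Szero F).
Local Notation opp := (@Sopp F).
Local Notation one := (@Sone F).

Lemma Smul0l s : mul zero s = (s.2, 0).
Proof. by case: s => x y; rewrite /Smul /=; congr pair; ring. Qed.

Lemma Smul0r s : mul s zero = (s.2, 0).
Proof. by case: s => x y; rewrite /Smul /=; congr pair; ring. Qed.

Lemma Smul1l s : mul one s = s.
Proof. by case: s => x y; rewrite /Smul /=; congr pair; ring. Qed.

Lemma Smul1r s : mul s one = s.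
Proof. by case: s => x y; rewrite /Smul /=; congr pair; ring. Qed.

Lemma inSE alpha s : inS mul zero alpha s <-> alpha = (s.2, 0).
Proof. by rewrite /inS Smul0l Smul0r; split=> [[<-] | ->]. Qed.

Lemma inS0E s : inS mul zero zero s <-> s.2 = 0.
Proof. by rewrite inSE /Szero; split=> [[] | <-] //; case: s. Qed.

Lemma Sadd_SStructure : SStructure add mul zero opp.
Proof.
split; first by case=> ? ?; case=> ? ?; case=> ? ?; rewrite /Sadd /=; congr pair; ring.
split; first by case=> ? ?; case=> ? ?; rewrite /Sadd /=; congr pair; ring.
split; first by case=> ? ?; rewrite /Sadd /=; congr pair; ring.
split; first by case=> ? ?; rewrite /Sadd /=; congr pair; ring.
by exists (0, 1); left; rewrite Smul0l => -[/eqP]; rewrite oner_eq0.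
Qed.

Lemma Smul_comm : SCommutative mul.
Proof. by case=> ? ?; case=> ? ?; rewrite /Smul /=; congr pair; ring. Qed.

Lemma Smul_WheelDistributive : WheelDistributive add mul zero.
Proof.
by case=> ? ?; case=> ? ?; case=> ? ?; rewrite /Smul /Sadd /=; congr pair; ring.
Qed.

Lemma Smul_SAssociative : SAssociative add mul zero opp one.
Proof.
case=> a b; case=> c d s /inS0E /= -> /inS0E /= ->; case: s => u v.
by rewrite /Smul /ssub /Sadd /Sopp /=; congr pair; ring.
Qed.

Lemma inS_IsBase alpha q : inS mul zero alpha q -> IsBase add mul zero alpha q.
Proof.
move=> /inSE def_alpha; split; first exact/inSE.
split=> [beta /inS0E beta2 | s /inSE].
  by apply/inSE; rewrite def_alpha /= beta2 addr0.
rewrite {alpha}def_alpha => -[q2]; exists (s.1 - q.1, 0); split; first exact/inS0E.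
by case: s q2 => x y /= <-; case: q => ? ?; rewrite /Sadd /=; congr pair; ring.
Qed.

Lemma Smul_Coordinated : Coordinated add mul zero.
Proof.
split; first by exists zero; apply/inS0E.
by move=> alpha [q /inS_IsBase]; exists q.
Qed.

Lemma q0_inS y : inS mul zero (y, 0) (q0 add mul opp one (0, 1) (y, 0)).
Proof. by apply/inSE; rewrite /q0 /ssub /Smul /Sadd /Sopp /=; congr pair; ring. Qed.

Lemma Smul_HasStandardBases : HasStandardBases add mul zero opp one.
Proof.
split; first exact: Smul_comm.
split; first exact: Smul_Coordinated.
have q1S : inS mul zero one (0, 1) by apply/inSE.
exists (0, 1); split=> //; split; first exact: inS_IsBase.
by move=> alpha [s /inSE ->]; split; [|apply: inS_IsBase]; apply: q0_inS.
Qed.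

Lemma Smul_EssentialSStructure : EssentialSStructure add mul zero opp one.
Proof.
split; first exact: Sadd_SStructure.
split; first exact: Smul_comm.
split; first exact: Smul_WheelDistributive.
split; first exact: Smul_SAssociative.
split; first exact: Smul_HasStandardBases.
split; first exact/inS0E.
split; first exact/inS0E.
move=> s; split=> [s0 | [x [x0 ->]]]; last by rewrite Smul1l.
by exists s; rewrite Smul1l.
Qed.

Lemma Sone_IsUnity : IsUnity mul zero one.
Proof.
split; first by exists (0, 1); apply/inSE.
by move=> s; rewrite Smul1l Smul1r.
Qed.

Lemma Smul_ScalarInverses : ScalarInverses mul zero.
Proof.
exists one; split; first exact: Sone_IsUnity.
case=> x y /inS0E /= -> nz_x; exists (x^-1, 0); split; first exact/inS0E.
have x_neq0 : x != 0 by apply: contra_notN nz_x => /eqP ->.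
by rewrite /Smul /=; split; congr pair; rewrite ?mulfV ?mulVf //; ring.
Qed.

Lemma Smul_SField : SField add mul zero opp one.
Proof.
split; last exact: Smul_ScalarInverses.
by split; [exact: Smul_EssentialSStructure | exists one; exact: Sone_IsUnity].
Qed.

Lemma S0IsoF_pair : S0IsoF add mul zero (@GRing.add F) (@GRing.mul F).
Proof.
exists (fun a => (a, 0)); split; first by move=> a; apply/inS0E.
split; first by move=> a b [].
split; first by case=> x y /inS0E /= ->; exists x.
by split=> a b; rewrite /Sadd /Smul /=; congr pair; ring.
Qed.

End PairConstruction.

Theorem theorem3p4p2 (F : fieldType) :
  ProperSFieldExtension (@Sadd F) (@Smul F) (@Szero F) (@Sopp F) (@Sone F)
    (@GRing.add F) (@GRing.mul F).
Proof.
split; first exact: Smul_SField.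
split; last exact: S0IsoF_pair.
exact: SExtension_of_S0IsoF (Sadd_SStructure F) (S0IsoF_pair F).
Qed.
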